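(* Let $G=(V,E)$ be a connected graph such that $(V,\mathcal{M}_{m^3_3}(G))$ is a convex geometry. Then $G$ is house-free, hole-free and domino-free.
   Context: All graphs are finite and simple. A path in $G$ is induced if it is an induced subgraph of $G$; its length is its number of edges. For vertices $u,v$, the $m^3$-interval $I_{m^3}[u,v]$ is the set of all vertices lying on some induced $u$–$v$ path of length at least $3$. A set $S\subseteq V$ is $m^3$-convex if $I_{m^3}[u,v]\subseteq S$ for all $u,v\in S$. For $U\subseteq V$ with $|U|\ge 2$, a minimal $U$-tree is a subgraph $T$ of $G$ containing $U$ such that $T$ is a tree and every vertex of $V(T)\setminus U$ is a cut-vertex of the subgraph of $G$ induced by $V(T)$; the monophonic interval $I_m(U)$ is the set of all vertices lying in some minimal $U$-tree. A set $S$ is $m_3$-convex if $I_m(U)\subseteq S$ for every $3$-element subset $U\subseteq S$. A set is $m^3_3$-convex if it is both $m^3$-convex and $m_3$-convex; $\mathcal{M}_{m^3_3}(G)$ denotes the family of $m^3_3$-convex sets. An alignment of a finite set $V$ is a family $\mathcal{M}$ of subsets of $V$ closed under intersection and containing $\emptyset$ and $V$; its members are called convex sets. The convex hull of $S\subseteq V$ is the smallest convex set containing $S$. For $X\in\mathcal{M}$, $x\in X$ is an extreme point of $X$ if $X\setminus\{x\}\in\mathcal{M}$. $(V,\mathcal{M})$ is a convex geometry if every convex set is the convex hull of its set of extreme points. A hole is an induced cycle of length at least $5$. The house is the graph obtained from a $4$-cycle $x_1x_2x_3x_4x_1$ by adding a vertex $y$ adjacent exactly to $x_1$ and $x_2$.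 The domino is the graph on six vertices consisting of a $6$-cycle $x_1x_2\dots x_6x_1$ together with the single chord $x_1x_4$. $G$ is $F$-free if it has no induced subgraph isomorphic to $F$ (hole-free: no induced cycle of length at least $5$). *)

(* Finite simple graphs: a symmetric irreflexive relation
   e : rel T on a finite type T (vertex set = all of T). *)
From mathcomp Require Import all_boot.
Set Implicit Arguments. Unset Strict Implicit. Unset Printing Implicit Defensive.

Section Graphs.
Variable T : finType.
Variable e : rel T.

(* u :: p is an induced path of G (vertices distinct; two vertices are
   adjacent iff consecutive). It is a path from u to (last u p) of length
   size p. *)
Definition ipath (u : T) (p : seq T) : Prop :=
  let q := u :: p in
  uniq q /\
  forall i j, i < size q -> j < size q ->
    e (nth u q i) (nth u q j) = ((i.+1 == j) || (j.+1 == i)).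

Definition in_m3I (u v x : T) : Prop :=
  exists p, ipath u p /\ last u p = v /\ 3 <= size p /\ x \in u :: p.

Definition m3_convex (S : {set T}) : Prop :=
  forall u v x, u \in S -> v \in S -> in_m3I u v x -> x \in S.

Definition restrict (W : {set T}) : rel T :=
  [rel x y | [&& e x y, x \in W & y \in W]].

(* w is a cut-vertex of G[W]: removing w disconnects two vertices that were
   connected in G[W] (i.e. the number of components increases). *)
Definition cut_vertex (W : {set T}) (w : T) : Prop :=
  w \in W /\
  exists a b, [/\ a \in W :\ w, b \in W :\ w,
                  connect (restrict W) a b & ~~ connect (restrict (W :\ w)) a b].

Definition is_tree (W : {set T}) (f : rel T) : Prop :=
  (forall a b, a \in W -> b \in W -> connect f a b) /\
  ~ (exists c : seq T, [/\ uniq c, 3 <= size c & cycle f c]).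

Definition minimal_Utree (U W : {set T}) (f : rel T) : Prop :=
  [/\ U \subset W,
      symmetric f,
      (forall x y, f x y -> [&& e x y, x \in W & y \in W]),
      is_tree W f &
      (forall w, w \in W -> w \notin U -> cut_vertex W w)].

Definition in_mI (U : {set T}) (x : T) : Prop :=
  exists W f, minimal_Utree U W f /\ x \in W.

Definition m_3_convex (S : {set T}) : Prop :=
  forall (U : {set T}) x, U \subset S -> #|U| = 3 -> in_mI U x -> x \in S.

Definition Mm33 (S : {set T}) : Prop := m3_convex S /\ m_3_convex S.

Definition contains_induced (n : nat) (F : rel 'I_n) : Prop :=
  exists g : 'I_n -> T, injective g /\ forall i j, e (g i) (g j) = F i j.

End Graphs.

Section ConvexGeometry.
Variable T : finType.
Variable M : {set T} -> Prop.

Definition is_hull (Y : T -> Prop) (X : {set T}) : Prop :=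
  [/\ M X, (forall x, Y x -> x \in X) &
      (forall C, M C -> (forall x, Y x -> x \in C) -> X \subset C)].

Definition extreme (X : {set T}) (x : T) : Prop := x \in X /\ M (X :\ x).

Definition alignment : Prop :=
  [/\ M set0, M setT & forall A B, M A -> M B -> M (A :&: B)].

Definition convex_geometry : Prop :=
  alignment /\ forall X, M X -> is_hull (extreme X) X.
End ConvexGeometry.

Definition cycle_rel (k : nat) : rel 'I_k :=
  fun i j => (i.+1 %% k == j) || (j.+1 %% k == i).

(* house: 4-cycle 0-1-2-3-0 (x1..x4) plus vertex 4 (y) adjacent to 0 and 1 *)
Definition house_edge (a b : nat) : bool :=
  [|| (a == 0) && (b == 1), (a == 1) && (b == 2), (a == 2) && (b == 3),
      (a == 3) && (b == 0), (a == 4) && (b == 0) | (a == 4) && (b == 1)].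
Definition house_rel : rel 'I_5 :=
  fun i j => house_edge i j || house_edge j i.

(* domino: 6-cycle 0-1-2-3-4-5-0 (x1..x6) plus chord 0-3 (x1x4) *)
Definition domino_rel : rel 'I_6 :=
  fun i j => [|| cycle_rel i j, (val i == 0) && (val j == 3) | (val i == 3) && (val j == 0)].

Definition house_free (T : finType) (e : rel T) : Prop := ~ contains_induced e house_rel.
Definition domino_free (T : finType) (e : rel T) : Prop := ~ contains_induced e domino_rel.
Definition hole_free (T : finType) (e : rel T) : Prop :=
  forall k, 5 <= k -> ~ contains_induced e (@cycle_rel k).

From mathcomp Require Import all_boot.
From Stdlib Require Import Classical.
From mathcomp Require Import zify.

Set Implicit Arguments. Unset Strict Implicit. Unset Printing Implicit Defensive.

(* In a convex geometry, suppose two sets S1, S2 span each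
   other (every convex set containing one contains the other).  Then they
   have the same convex hull X, and every extreme point of X lies in S1 and
   in S2; since X is the hull of its extreme points, X is contained in any
   convex set Y containing S1 :&: S2.
   Each forbidden graph F (house, hole, domino) contains two vertex pairs
   {a, b} and {c, d}, with b outside {c, d}, that span each other for
   m^3-convexity in F itself: the missing vertices lie on induced paths of
   length 3 (or, in a hole, on long arcs).  An induced copy of F in G pulls
   m^3-convex sets of G back to m^3-convex sets of F, so {g a, g b} and
   {g c, g d} span each other in M_{m^3_3}(G).  With the convex singleton
   Y = {g a}, the argument above gives g b = g a, a contradiction. *)

Section ConvexGeometryFacts.
Variables (T : finType) (M : {set T} -> Prop).

Definition spans (S1 S2 : {set T}) : Prop :=
  forall C, M C -> S1 \subset C -> S2 \subset C.

(* In an alignment every set has a convex hull: shrink the convex set setT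
   by intersections as long as it is not below some convex superset of S. *)
Lemma hull_exists (al : alignment M) (S : {set T}) :
  exists X, is_hull M (fun x => x \in S) X.
Proof.
case: al => _ MT MI.
suff hullP : forall n (X : {set T}), #|X| < n -> M X -> S \subset X ->
    exists X', is_hull M (fun x => x \in S) X'.
  by apply: (hullP #|T|.+1 setT) => //; rewrite ?ltnS ?max_card ?subsetT.
elim=> [|n IH] X; rewrite ?ltn0 // => cardX MX SX.
have [minX | notmin] := classic (forall C, M C -> S \subset C -> X \subset C).
  exists X; split=> // [x /(subsetP SX) // | C MC SC].
  by apply: minX => //; apply/subsetP.
have [C notCX] := not_all_ex_not _ _ notmin.
have [MC {}notCX] := imply_to_and _ _ notCX.
have [SC XC] := imply_to_and _ _ notCX.
apply: (IH (X :&: C)); last 2 first.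
- exact: MI.
- by rewrite subsetI SX SC.
have ltX : #|X :&: C| < #|X|.
  rewrite proper_card // properEneq subsetIl andbT.
  by apply: contra_notN XC => /eqP <-; exact: subsetIr.
by apply: leq_trans ltX _; rewrite -ltnS.
Qed.

(* The extreme points of the hull of S belong to S: removing any other
   point leaves a convex set still containing S. *)
Lemma extreme_in_generators (S X : {set T}) (x : T) :
  is_hull M (fun y => y \in S) X -> extreme M X x -> x \in S.
Proof.
case=> _ SX minX [xX MXx]; apply: contraT => xS.
have /subsetP /(_ x xX) : X \subset X :\ x.
  apply: minX => // y yS; rewrite in_setD1 SX // andbT.
  by apply: contraNneq xS => <-.
by rewrite in_setD1 eqxx.
Qed.

(* Mutually spanning sets: their common hull, hence S1 itself, lies in every
   convex set containing S1 :&: S2. *)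
Lemma mutually_spanning_sets (cg : convex_geometry M) (S1 S2 Y : {set T}) :
  spans S1 S2 -> spans S2 S1 -> M Y -> S1 :&: S2 \subset Y -> S1 \subset Y.
Proof.
case: cg => al hull sp12 sp21 MY S12Y.
have [X hull1] := hull_exists al S1.
have [MX S1X minX1] := hull1.
have hull2 : is_hull M (fun x => x \in S2) X.
  split=> // [x|C MC S2C].
    by apply/subsetP: x; apply: sp12 => //; apply/subsetP.
  by apply: minX1 => //; apply/subsetP; apply: sp21 => //; apply/subsetP.
have [_ _ minX] := hull X MX.
apply/subsetP=> x /S1X; apply/subsetP: x; apply: minX => // x ex.
apply: (subsetP S12Y); rewrite inE.
by rewrite (extreme_in_generators hull1 ex) (extreme_in_generators hull2 ex).
Qed.
End ConvexGeometryFacts.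

Section InducedPaths.
Variables (T : finType) (e : rel T).

(* A boolean version of ipath, decidable by computation on concrete graphs. *)
Definition ipathb (u : T) (p : seq T) : bool :=
  let q := u :: p in
  uniq q &&
  all (fun i => all (fun j =>
         e (nth u q i) (nth u q j) == (i.+1 == j) || (j.+1 == i))
       (iota 0 (size q))) (iota 0 (size q)).

Lemma ipathbP (u : T) (p : seq T) : ipathb u p -> ipath e u p.
Proof.
case/andP=> uq /allP adj; split=> // i j hi hj.
have memi m : m < size (u :: p) -> m \in iota 0 (size (u :: p)) by rewrite mem_iota.
by move/allP: (adj i (memi i hi)) => /(_ j (memi j hj)) /eqP.
Qed.

Lemma ipath_fun (f : nat -> T) (L : nat) :
  (forall i j, i <= L -> j <= L -> f i = f j -> i = j) ->
  (forall i j, i <= L -> j <= L -> e (f i) (f j) = (i.+1 == j) || (j.+1 == i)) ->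
  ipath e (f 0) [seq f i | i <- iota 1 L].
Proof.
move=> finj fadj; rewrite /ipath; have -> : f 0 :: [seq f i | i <- iota 1 L] =
  [seq f i | i <- iota 0 L.+1] by [].
split.
  rewrite map_inj_in_uniq ?iota_uniq // => i j.
  by rewrite !mem_iota !add0n !ltnS; exact: finj.
rewrite size_map size_iota => i j hi hj.
by rewrite !(nth_map 0) ?size_iota // !nth_iota // fadj.
Qed.

Lemma m3_convex_ipath (C : {set T}) (u : T) (p : seq T) (x : T) :
  m3_convex e C -> ipath e u p -> 3 <= size p ->
  u \in C -> last u p \in C -> x \in u :: p -> x \in C.
Proof. by move=> HC up p3 uC lC xp; apply: (HC u (last u p)) => //; exists p. Qed.

Lemma m3_convex_ipathb (C : {set T}) (u : T) (p : seq T) (x : T) :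
  m3_convex e C -> ipathb u p -> 3 <= size p ->
  u \in C -> last u p \in C -> x \in u :: p -> x \in C.
Proof. by move=> HC /ipathbP; exact: m3_convex_ipath. Qed.

(* Singletons are m^3_3-convex: an induced path of positive length has
   distinct ends, and a singleton contains no 3-element set. *)
Lemma Mm33_set1 (y : T) : Mm33 e [set y].
Proof.
split=> [u v x | U x sU cU].
  rewrite !in_set1 => /eqP -> /eqP -> [[|a p] [[/= up _] [lp [//]]]] _.
  by case/andP: up => /negP []; rewrite -lp mem_last.
by have := subset_leq_card sU; rewrite cards1 cU.
Qed.
End InducedPaths.

Section InducedSubgraph.
Variables (T : finType) (e : rel T) (n : nat) (F : rel 'I_n) (g : 'I_n -> T).
Hypothesis g_inj : injective g.
Hypothesis g_induced : forall i j, e (g i) (g j) = F i j.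

Lemma ipath_map (u : 'I_n) (p : seq 'I_n) : ipath F u p -> ipath e (g u) (map g p).
Proof.
case=> uq adj; split; first by rewrite -map_cons map_inj_uniq.
move=> i j; rewrite -map_cons size_map => hi hj.
by rewrite !(nth_map u) // g_induced adj.
Qed.

Lemma m3_convex_preimage (C : {set T}) : m3_convex e C -> m3_convex F (g @^-1: C).
Proof.
move=> HC u v x; rewrite !inE => uC vC [p [up [lp [p3 xp]]]].
apply: (HC (g u) (g v)) => //; exists (map g p).
split; first exact: ipath_map.
by rewrite last_map lp size_map -map_cons map_f.
Qed.

Definition pair_spans (a b c d : 'I_n) : Prop :=
  forall D : {set 'I_n}, m3_convex F D -> a \in D -> b \in D -> c \in D /\ d \in D.

Lemma no_mutually_spanning_pairs (cg : convex_geometry (Mm33 e)) (a b c d : 'I_n) :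
  a != b -> b != c -> b != d -> pair_spans a b c d -> pair_spans c d a b -> False.
Proof.
move=> ab bc bd sp1 sp2.
have lift x y z w : pair_spans x y z w ->
    spans (Mm33 e) [set g x; g y] [set g z; g w].
  move=> sp C [HC _] /subsetP xyC.
  have inpre v : g v \in C -> v \in g @^-1: C by rewrite inE.
  have [] := sp _ (m3_convex_preimage HC) (inpre _ (xyC _ (set21 _ _)))
                                         (inpre _ (xyC _ (set22 _ _))).
  by rewrite !inE => zC wC; apply/subsetP=> v; rewrite !inE => /orP [] /eqP ->.
have inter : [set g a; g b] :&: [set g c; g d] \subset [set g a].
  apply/subsetP=> x; rewrite !inE => /andP [/orP [//|/eqP ->]].
  by rewrite !(inj_eq g_inj) (negPf bc) (negPf bd).
have /subsetP /(_ (g b)) := mutually_spanning_sets cg (lift _ _ _ _ sp1)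
  (lift _ _ _ _ sp2) (Mm33_set1 e (g a)) inter.
by rewrite !inE eqxx orbT (inj_eq g_inj) eq_sym (negPf ab) => /(_ isT).
Qed.
End InducedSubgraph.

Local Notation house_vtx i := (@Ordinal 5 i isT).
Local Notation domino_vtx i := (@Ordinal 6 i isT).

(* In the house x1x2x3x4 + y (vertices 0..3 and 4), {y, x3} and {y, x4}
   span each other via the induced paths y x1 x4 x3 and y x2 x3 x4. *)
Lemma house_spans_fwd :
  pair_spans house_rel (house_vtx 4) (house_vtx 2) (house_vtx 4) (house_vtx 3).
Proof.
move=> D HD yD x3D; split=> //.
by apply: (m3_convex_ipathb (u := house_vtx 4)
             (p := [:: house_vtx 0; house_vtx 3; house_vtx 2]) HD).
Qed.

Lemma house_spans_bwd :
  pair_spans house_rel (house_vtx 4) (house_vtx 3) (house_vtx 4) (house_vtx 2).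
Proof.
move=> D HD yD x4D; split=> //.
by apply: (m3_convex_ipathb (u := house_vtx 4)
             (p := [:: house_vtx 1; house_vtx 2; house_vtx 3]) HD).
Qed.

(* In the domino (6-cycle 0..5 with chord 0-3), {1, 4} and {2, 5} span each
   other via the induced paths 1 2 3 4, 1 0 5 4, 5 0 1 2 and 2 3 4 5. *)
Lemma domino_spans_fwd :
  pair_spans domino_rel (domino_vtx 1) (domino_vtx 4) (domino_vtx 2) (domino_vtx 5).
Proof.
move=> D HD x1D x4D; split.
- by apply: (m3_convex_ipathb (u := domino_vtx 1)
               (p := [:: domino_vtx 2; domino_vtx 3; domino_vtx 4]) HD).
- by apply: (m3_convex_ipathb (u := domino_vtx 1)
               (p := [:: domino_vtx 0; domino_vtx 5; domino_vtx 4]) HD).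
Qed.

Lemma domino_spans_bwd :
  pair_spans domino_rel (domino_vtx 2) (domino_vtx 5) (domino_vtx 1) (domino_vtx 4).
Proof.
move=> D HD x2D x5D; split.
- by apply: (m3_convex_ipathb (u := domino_vtx 5)
               (p := [:: domino_vtx 0; domino_vtx 1; domino_vtx 2]) HD).
- by apply: (m3_convex_ipathb (u := domino_vtx 2)
               (p := [:: domino_vtx 3; domino_vtx 4; domino_vtx 5]) HD).
Qed.

Section Hole.
Variable k : nat.
Hypothesis k5 : 5 <= k.+1.
Let K := k.+1.

Definition cv (n : nat) : 'I_K := inord (n %% K).

Lemma cv_inj_mod (n m : nat) : cv n = cv m -> n %% K = m %% K.
Proof. by move/(congr1 val); rewrite /= !inordK ?ltn_mod. Qed.

Lemma cvD (n : nat) : cv (K + n) = cv n.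
Proof. by rewrite /cv modnDl. Qed.

Lemma cv_adj (n m : nat) :
  cycle_rel (cv n) (cv m) = (n.+1 %% K == m %% K) || (m.+1 %% K == n %% K).
Proof.
have modS a : (a %% K).+1 %% K = a.+1 %% K by rewrite -addn1 modnDml addn1.
by rewrite /cycle_rel !inordK ?ltn_mod // !modS.
Qed.

(* An arc of the hole with between 3 and K - 2 edges is an induced path, so
   an m^3-convex set containing its ends contains the whole arc. *)
Lemma hole_arc (D : {set 'I_K}) (s L i : nat) :
  m3_convex (@cycle_rel K) D -> 3 <= L -> L <= K - 2 ->
  cv s \in D -> cv (s + L) \in D -> i <= L -> cv (s + i) \in D.
Proof.
move=> HD L3 LK sD sLD iL.
have LK' : L.+1 < K by move: LK k5; rewrite /K; lia.
have arc : ipath (@cycle_rel K) (cv (s + 0)) [seq cv (s + j) | j <- iota 1 L].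
  apply: ipath_fun => j j' hj hj'.
    have [jK j'K] : j < K /\ j' < K by lia.
    by move/cv_inj_mod/eqP; rewrite eqn_modDl !modn_small // => /eqP.
  have [jK j'K] : j.+1 < K /\ j'.+1 < K by lia.
  by rewrite cv_adj -!addnS !eqn_modDl !modn_small // ltnW.
apply: (m3_convex_ipath HD arc).
- by rewrite size_map size_iota.
- by rewrite addn0.
- by rewrite (last_map (fun j => cv (s + j))) (last_nth 0) size_iota (nth_iota _ 0 (ltnSn L)).
- have iL' : i \in iota 0 L.+1 by rewrite mem_iota.
  exact: (map_f (fun j => cv (s + j)) iL').
Qed.

Lemma hole_short_arc (D : {set 'I_K}) :
  m3_convex (@cycle_rel K) D -> cv 0 \in D -> cv 3 \in D -> cv 1 \in D /\ cv 2 \in D.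
Proof.
move=> HD h0 h3; have LK : 3 <= K - 2 by move: k5; rewrite /K; lia.
by split; apply: (hole_arc (s := 0) (L := 3)).
Qed.

(* {0, 2} and {1, 3} span each other, using the long arcs from 2 to K and
   from 3 to K + 1, which have K - 2 edges. *)
Lemma hole_spans_fwd : pair_spans (@cycle_rel K) (cv 0) (cv 2) (cv 1) (cv 3).
Proof.
move=> D HD h0 h2.
have [L3 L1] : 3 <= K - 2 /\ 1 <= K - 2 by move: k5; rewrite /K; lia.
have hK : cv (2 + (K - 2)) \in D.
  by rewrite (_ : 2 + (K - 2) = K + 0) ?cvD //; move: k5; rewrite /K; lia.
have h3 : cv (2 + 1) \in D := hole_arc HD L3 (leqnn _) h2 hK L1.
by split=> //; case: (hole_short_arc HD h0 h3).
Qed.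

Lemma hole_spans_bwd : pair_spans (@cycle_rel K) (cv 1) (cv 3) (cv 0) (cv 2).
Proof.
move=> D HD h1 h3.
have [L3 LK] : 3 <= K - 2 /\ K - 3 <= K - 2 by move: k5; rewrite /K; lia.
have hK1 : cv (3 + (K - 2)) \in D.
  by rewrite (_ : 3 + (K - 2) = K + 1) ?cvD //; move: k5; rewrite /K; lia.
have h0 : cv (3 + (K - 3)) \in D := hole_arc HD L3 (leqnn _) h3 hK1 LK.
rewrite (_ : 3 + (K - 3) = K + 0) ?cvD in h0; last by move: k5; rewrite /K; lia.
by split=> //; case: (hole_short_arc HD h0 h3).
Qed.

Lemma hole_pairs_distinct : [/\ cv 0 != cv 2, cv 2 != cv 1 & cv 2 != cv 3].
Proof.
have cv_neq n m : n < 4 -> m < 4 -> n != m -> cv n != cv m.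
  move=> n4 m4 nm; apply: contra nm => /eqP /cv_inj_mod.
  by rewrite !modn_small // => [->||]; move: k5; rewrite /K; lia.
by split; apply: cv_neq.
Qed.
End Hole.

Theorem mainTheorem4 (T : finType) (e : rel T)
  (e_sym : symmetric e) (e_irr : irreflexive e)
  (G_conn : forall x y : T, connect e x y)
  (cg : convex_geometry (Mm33 e)) :
  house_free e /\ hole_free e /\ domino_free e.
Proof.
split; [|split].
- case=> g [g_inj g_ind].
  by apply: (no_mutually_spanning_pairs g_inj g_ind cg _ _ _
               house_spans_fwd house_spans_bwd).
- case=> [|k] // k5 [g [g_inj g_ind]].
  have [d02 d21 d23] := hole_pairs_distinct k5.
  exact: (no_mutually_spanning_pairs g_inj g_ind cg d02 d21 d23
            (hole_spans_fwd k5) (hole_spans_bwd k5)).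
- case=> g [g_inj g_ind].
  by apply: (no_mutually_spanning_pairs g_inj g_ind cg _ _ _
               domino_spans_fwd domino_spans_bwd).
Qed.
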